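(* Let $p,q\in(0,1)$ be parameters of two Bernoulli distributions $[p,1-p]$ and $[q,1-q]$. Let $m\ge1$ be an integer such that $mp$ and $mq$ are integers. Define $l_{p2q}=\binom{m}{mp}q^{mp}(1-q)^{m-mp}$, the likelihood of observing empirical distribution $p$ from $m$ samples when the true distribution is $q$. Define $l_{q2p}=\binom{m}{mq}p^{mq}(1-p)^{m-mq}$ analogously. If $l_{p2q}>l_{q2p}$, then $D_{\chi^2}(p,q)<D_{\chi^2}(q,p)$.
   Context: For Bernoulli parameters $p,q\in(0,1)$, the $\chi^2$ divergence is $D_{\chi^2}(p,q)=\frac{p^2}{q}+\frac{(1-p)^2}{1-q}-1=\frac{(p-q)^2}{q(1-q)}$. *)

From mathcomp Require Import all_boot all_order all_algebra.
From mathcomp Require Import reals.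
Set Implicit Arguments. Unset Strict Implicit. Unset Printing Implicit Defensive.
Import Order.TTheory GRing.Theory Num.Theory.
Local Open Scope ring_scope.

Definition chi2 {R : realType} (p q : R) : R :=
  p ^+ 2 / q + (1 - p) ^+ 2 / (1 - q) - 1.

Definition lik {R : realType} (m k : nat) (q : R) : R :=
  ('C(m, k))%:R * q ^+ k * (1 - q) ^+ (m - k).

(* As chi2 p q = (p - q)^2 / (q (1 - q)), the inequality
   chi2 q p <= chi2 p q says q (1 - q) <= p (1 - p); passing to (1 - p, 1 - q)
   if necessary, p <= q and p + q >= 1.  With a = m p and b = m q, multiplying
   both likelihoods by m^m p^a (1 - p)^(m - a) q^b (1 - q)^(m - b) splits the
   comparison into two factors:
   - 'C(m, k) k^k (m - k)^(m - k) grows as k moves away from m / 2, because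
     (1 + 1/n)^n is nondecreasing (Bernoulli's inequality);
   - q^(a + b) (1 - q)^(2m - a - b) <= p^(a + b) (1 - p)^(2m - a - b): for
     c = (p + q) / 2 >= 1/2, the expected log-likelihood
     c ln x + (1 - c) ln (1 - x) is larger at x = c - d than at x = c + d,
     since the difference has derivative 2 d^2 (2c - 1) / (positive) in d. *)

From mathcomp Require Import all_boot all_order all_algebra.
From mathcomp Require Import boolp functions reals normedtype.
From mathcomp Require Import derive realfun exp.
From mathcomp Require Import ring lra zify.
Import Order.TTheory GRing.Theory Num.Theory.
Import numFieldNormedType.Exports.
Local Open Scope ring_scope.

(* [m ^+ m * lik m k (k / m)]: the likelihood of [k] successes at its maximiser. *)
Definition peak_lik {R : nzSemiRingType} (m k : nat) : R :=
  'C(m, k)%:R * k%:R ^+ k * (m - k)%:R ^+ (m - k).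

Section RealDomain.
Variable R : realDomainType.

Lemma leq_of_natr_eq_mul (m k : nat) (p : R) :
  p <= 1 -> k%:R = m%:R * p -> (k <= m)%N.
Proof. by move=> p_le1 kE; rewrite -(ler_nat R) kE ler_piMr. Qed.

Lemma bernoulli_ineq (x : R) (k : nat) : -1 <= x -> 1 + k%:R * x <= (1 + x) ^+ k.
Proof.
move=> x_ge; elim: k => [|k IHk]; first by rewrite mul0r addr0.
have k_ge0 : 0 <= k%:R :> R by [].
rewrite exprS -natr1; apply: le_trans (ler_wpM2l _ IHk); nra.
Qed.

Lemma peak_lik_ge0 (m k : nat) : 0 <= peak_lik m k :> R.
Proof. by rewrite !mulr_ge0 ?exprn_ge0. Qed.

Lemma peak_lik_sym (m k : nat) : (k <= m)%N -> peak_lik m (m - k) = peak_lik m k :> R.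
Proof. by move=> k_le_m; rewrite /peak_lik bin_sub // subKn // mulrAC. Qed.

End RealDomain.

Section RealField.
Variable R : realFieldType.

(* ((a + 1) / a)^a <= ((a + 2) / (a + 1))^(a + 1): Bernoulli at x = -1/(a + 1)^2. *)
Lemma euler_seq_succ (a : nat) : (1 <= a)%N ->
  a.+1%:R ^+ (a + a).+1 <= a%:R ^+ a * a.+2%:R ^+ a.+1 :> R.
Proof.
move=> a_ge1; set b : R := a%:R.
have b_ge1 : 1 <= b by rewrite ler1n.
have -> : a.+1%:R = b + 1 :> R by rewrite -natr1.
have -> : a.+2%:R = b + 2 :> R by rewrite -addn2 natrD.
have sq_ge1 : 1 <= (b + 1) ^+ 2 by rewrite expr_ge1 //; lra.
have := @bernoulli_ineq R (- ((b + 1) ^+ 2)^-1) a.+1.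
rewrite lerNl opprK invf_le1 ?(lt_le_trans ltr01) // -natr1 -/b => /(_ sq_ge1).
have -> : 1 + (b + 1) * - ((b + 1) ^+ 2)^-1 = b / (b + 1) by field; lra.
have -> : 1 - ((b + 1) ^+ 2)^-1 = b * (b + 2) / (b + 1) ^+ 2 by field; lra.
rewrite expr_div_n -exprM ler_pdivrMr; last by lra.
rewrite mulrAC ler_pdivlMr; last by rewrite exprn_gt0 //; lra.
have -> : (2 * a.+1)%N = (a + a).+2 by lia.
have -> : (b * (b + 2)) ^+ a.+1 * (b + 1) =
    b * (b + 1) * (b ^+ a * (b + 2) ^+ a.+1).
  by rewrite exprMn exprS; ring.
have bb_gt0 : 0 < b * (b + 1) by rewrite mulr_gt0 //; lra.
by rewrite [(b + 1) ^+ (a + a).+2]exprS (mulrA b) ler_pM2l.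
Qed.

(* (1 + 1/n)^n <= (1 + 1/y)^y, denominators cleared. *)
Lemma euler_seq_ndecr (n y : nat) : (n <= y)%N ->
  n.+1%:R ^+ n * y%:R ^+ y <= y.+1%:R ^+ y * n%:R ^+ n :> R.
Proof.
move=> /subnKC <-; elim: (y - n)%N => [|i IHi]; first by rewrite addn0 mulrC.
rewrite addnS; have [/eqP | y_gt0] := posnP (n + i).
  rewrite addn_eq0 => /andP[/eqP -> /eqP ->].
  by rewrite !expr0 !expr1 mul1r mulr1 ler_nat.
move: IHi y_gt0; clear y; set y := (n + i)%N => IHi y_gt0.
have yy_gt0 : 0 < y%:R ^+ y :> R by rewrite exprn_gt0 // ltr0n.
rewrite -(ler_pM2r yy_gt0) mulrAC.
apply: le_trans (ler_wpM2r (exprn_ge0 _ (ler0n _ _)) IHi) _.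
have -> : y.+1%:R ^+ y * n%:R ^+ n * y.+1%:R ^+ y.+1 =
    n%:R ^+ n * y.+1%:R ^+ (y + y).+1 :> R.
  by rewrite -addnS exprD; ring.
have -> : y.+2%:R ^+ y.+1 * n%:R ^+ n * y%:R ^+ y =
    n%:R ^+ n * (y%:R ^+ y * y.+2%:R ^+ y.+1) :> R.
  by ring.
by rewrite ler_wpM2l ?exprn_ge0 ?euler_seq_succ.
Qed.

(* The ratio of the right to the left side is (1 + 1/k)^k / (1 + 1/n)^n. *)
Lemma peak_lik_succ (k n : nat) : (n <= k)%N ->
  peak_lik (k.+1 + n) k <= peak_lik (k.+1 + n) k.+1 :> R.
Proof.
move=> n_le_k; rewrite /peak_lik.
have -> : (k.+1 + n - k = n.+1)%N by lia.
have -> : (k.+1 + n - k.+1 = n)%N by lia.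
have binS : k.+1%:R * 'C(k.+1 + n, k.+1)%:R = n.+1%:R * 'C(k.+1 + n, k)%:R :> R.
  by rewrite -!natrM mul_bin_left; congr (_ * _)%:R; lia.
have -> : 'C(k.+1 + n, k.+1)%:R * k.+1%:R ^+ k.+1 * n%:R ^+ n =
    (k.+1%:R * 'C(k.+1 + n, k.+1)%:R) * (k.+1%:R ^+ k * n%:R ^+ n) :> R.
  by rewrite exprS; ring.
have -> : 'C(k.+1 + n, k)%:R * k%:R ^+ k * n.+1%:R ^+ n.+1 =
    (n.+1%:R * 'C(k.+1 + n, k)%:R) * (n.+1%:R ^+ n * k%:R ^+ k) :> R.
  by rewrite exprS; ring.
by rewrite binS ler_wpM2l ?euler_seq_ndecr // mulr_ge0.
Qed.

Lemma peak_lik_ndecr (m k j : nat) : (m <= k + k)%N -> (k <= j)%N -> (j <= m)%N ->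
  peak_lik m k <= peak_lik m j :> R.
Proof.
move=> m_le_kk; elim: j => [|j IHj]; first by rewrite leqn0 => /eqP ->.
rewrite leq_eqVlt => /orP[/eqP -> // | k_le_j] Sj_le_m.
apply: le_trans (IHj k_le_j (ltnW Sj_le_m)) _.
have := @peak_lik_succ j (m - j.+1); rewrite subnKC //; apply; lia.
Qed.

Lemma peak_lik_le (m k j : nat) : (k <= j)%N -> (j <= m)%N -> (m <= k + j)%N ->
  peak_lik m k <= peak_lik m j :> R.
Proof.
move=> k_le_j j_le_m m_le_kj.
have [m_le_kk | kk_lt_m] := leqP m (k + k); first exact: peak_lik_ndecr.
rewrite -peak_lik_sym; last by lia.
apply: peak_lik_ndecr; lia.
Qed.

End RealField.

Section LogLikelihood.
Variable R : realType.

Lemma is_derive_ln_affine (a s x : R) : 0 < a + s * x ->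
  is_derive x 1 (fun u => ln (a + s * u)) (s / (a + s * x)).
Proof.
move=> pos.
have daff : is_derive x 1 (fun u : R => a + s * u) s.
  apply: is_derive_eq
    (is_deriveD (is_derive_cst a x 1) (is_deriveZ s (is_derive_id x 1))) _.
  by rewrite add0r /GRing.scale /= mulr1.
rewrite [s / _]mulrC.
exact: (@is_derive1_comp R (@ln R) (fun u => a + s * u) x _ _ (is_derive1_ln pos) daff).
Qed.

Definition loglik (c x : R) : R := c * ln x + (1 - c) * ln (1 - x).

Lemma is_derive_loglik_affine (c s t : R) : 0 < c + s * t < 1 ->
  is_derive t 1 (fun u => loglik c (c + s * u))
    (s * (c / (c + s * t) - (1 - c) / (1 - c - s * t))).
Proof.
move=> /andP[pos lt1].
have -> : (fun u => loglik c (c + s * u)) =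
    c \*: (fun u => ln (c + s * u)) + (1 - c) \*: (fun u => ln (1 - c + - s * u)).
  by apply/funext => u; rewrite /loglik !fctE /= mulNr opprD addrA.
have dcompl := @is_derive_ln_affine (1 - c) (- s) t ltac:(lra).
apply: (is_derive_eq (is_deriveD (is_deriveZ c (is_derive_ln_affine _ _ _ pos))
                                 (is_deriveZ (1 - c) dcompl))).
rewrite /GRing.scale /=; field; lra.
Qed.

Lemma loglik_mirror_le (c d : R) : 1 / 2 <= c -> 0 <= d -> c + d < 1 ->
  loglik c (c + d) <= loglik c (c - d).
Proof.
move=> c_ge d_ge0 cd_lt1.
pose f t := loglik c (c + -1 * t) - loglik c (c + 1 * t).
pose df t := -1 * (c / (c + -1 * t) - (1 - c) / (1 - c - -1 * t)) -
              1 * (c / (c + 1 * t) - (1 - c) / (1 - c - 1 * t)).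
have f_derive t : 0 <= t <= d -> is_derive t 1 f (df t).
  move=> /andP[t_ge0 t_le]; apply: is_deriveB; apply: is_derive_loglik_affine;
  by apply/andP; split; lra.
have in_seg t : t \in `]0, d[ -> 0 <= t <= d.
  by rewrite in_itv /= => /andP[? ?]; apply/andP; split; lra.
suff : f 0 <= f d by rewrite /f !mulr0 !addr0 subrr mulN1r mul1r subr_ge0.
apply: (@ger0_derive1_ndecr _ f 0 d) => //.
- by move=> t /in_seg /f_derive [].
- move=> t /in_seg t_seg; rewrite derive1E; have [_ ->] := f_derive t t_seg.
  case/andP: t_seg => t_ge0 t_le.
  have -> : df t = 2 * t ^+ 2 * (2 * c - 1) /
      ((c - t) * (c + t) * (1 - c + t) * (1 - c - t)).
    by rewrite /df; field; rewrite !lt0r_neq0 //; lra.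
  by rewrite divr_ge0 ?mulr_ge0 ?sqr_ge0 //; lra.
- apply: derivable_within_continuous => t.
  by rewrite in_itv /= => /f_derive [].
Qed.

Lemma expr_mirror_le (p q k : R) (s t : nat) : 0 < p -> p <= q -> q < 1 ->
  1 <= p + q -> 0 <= k -> s%:R = k * (p + q) -> t%:R = k * (2 - (p + q)) ->
  q ^+ s * (1 - q) ^+ t <= p ^+ s * (1 - p) ^+ t.
Proof.
move=> p_gt0 p_le_q q_lt1 pq_ge1 k_ge0 sE tE.
set c := (p + q) / 2; set d := (q - p) / 2.
have ln_prod x : 0 < x -> x < 1 -> ln (x ^+ s * (1 - x) ^+ t) = 2 * k * loglik c x.
  move=> x_gt0 x_lt1.
  rewrite lnM ?posrE ?exprn_gt0 ?subr_gt0 // !lnXn ?subr_gt0 //.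
  by rewrite -[ln x *+ _]mulr_natr -[ln (1 - x) *+ _]mulr_natr sE tE /loglik /c; field.
have q_gt0 : 0 < q by lra.
have p_lt1 : p < 1 by lra.
rewrite -ler_ln ?posrE ?mulr_gt0 ?exprn_gt0 ?subr_gt0 // !ln_prod //.
rewrite ler_wpM2l ?mulr_ge0 // (_ : q = c + d) 1?(_ : p = c - d);
  try by rewrite /c /d; field.
by apply: loglik_mirror_le; rewrite /c /d; lra.
Qed.

End LogLikelihood.

Section Likelihood.
Variable R : realType.

Lemma peak_likE {m k : nat} {p : R} : (k <= m)%N -> k%:R = m%:R * p ->
  peak_lik m k = m%:R ^+ m * lik m k p.
Proof.
move=> k_le_m kE.
have mE : m%:R ^+ m = m%:R ^+ k * m%:R ^+ (m - k) :> R by rewrite -exprD subnKC.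
rewrite /peak_lik /lik natrB // kE mE.
have -> : m%:R - m%:R * p = m%:R * (1 - p) :> R by ring.
rewrite !exprMn; ring.
Qed.

Lemma lik_compl (m k : nat) (q : R) : (k <= m)%N -> lik m (m - k) (1 - q) = lik m k q.
Proof.
move=> k_le_m; rewrite /lik bin_sub // subKn //.
by rewrite (_ : 1 - (1 - q) = q) 1?mulrAC //; ring.
Qed.

Lemma lik_le_of_sum_ge1 (m a b : nat) (p q : R) :
  (0 < m)%N -> 0 < p -> p <= q -> q < 1 -> 1 <= p + q ->
  a%:R = m%:R * p -> b%:R = m%:R * q -> lik m a q <= lik m b p.
Proof.
move=> m_gt0 p_gt0 p_le_q q_lt1 pq_ge1 aE bE.
have q_gt0 : 0 < q by lra.
have p_lt1 : p < 1 by lra.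
have a_le_m : (a <= m)%N by apply: leq_of_natr_eq_mul aE; lra.
have b_le_m : (b <= m)%N by apply: leq_of_natr_eq_mul bE; lra.
have a_le_b : (a <= b)%N by rewrite -(ler_nat R) aE bE ler_wpM2l.
have m_le_ab : (m <= a + b)%N by rewrite -(ler_nat R) natrD aE bE -mulrDr ler_peMr.
have peaks := @peak_lik_le R m a b a_le_b b_le_m m_le_ab.
have powers : q ^+ (a + b) * (1 - q) ^+ ((m - a) + (m - b)) <=
              p ^+ (a + b) * (1 - p) ^+ ((m - a) + (m - b)).
  apply: (@expr_mirror_le R p q m%:R) => //; rewrite natrD ?natrB // aE bE; ring.
set W := m%:R ^+ m * p ^+ a * (1 - p) ^+ (m - a) * q ^+ b * (1 - q) ^+ (m - b).
have W_gt0 : 0 < W by rewrite /W !mulr_gt0 ?exprn_gt0 ?ltr0n ?subr_gt0.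
rewrite -(ler_pM2r W_gt0).
have -> : lik m a q * W =
    peak_lik m a * (q ^+ (a + b) * (1 - q) ^+ ((m - a) + (m - b))).
  by rewrite (peak_likE a_le_m aE) /lik /W !exprD; ring.
have -> : lik m b p * W =
    peak_lik m b * (p ^+ (a + b) * (1 - p) ^+ ((m - a) + (m - b))).
  by rewrite (peak_likE b_le_m bE) /lik /W !exprD; ring.
apply: ler_pM peaks powers; first exact: peak_lik_ge0.
by rewrite mulr_ge0 ?exprn_ge0 //; lra.
Qed.

Lemma lik_le_of_var_le (m a b : nat) (p q : R) :
  (0 < m)%N -> 0 < p < 1 -> 0 < q < 1 -> a%:R = m%:R * p -> b%:R = m%:R * q ->
  q * (1 - q) <= p * (1 - p) -> lik m a q <= lik m b p.
Proof.
move=> m_gt0 /andP[p_gt0 p_lt1] /andP[q_gt0 q_lt1] aE bE var_le.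
have var_sub : 0 <= (q - p) * (p + q - 1) by nra.
have [p_lt_q | q_lt_p | pq] := ltgtP p q.
- have qp_gt0 : 0 < q - p by rewrite subr_gt0.
  have pq_ge1 : 1 <= p + q by rewrite -subr_ge0 -(pmulr_rge0 _ qp_gt0).
  by apply: lik_le_of_sum_ge1 => //; apply: ltW.
- have pq_gt0 : 0 < p - q by rewrite subr_gt0.
  have pq_le1 : p + q <= 1 by rewrite -subr_ge0 -(pmulr_rge0 _ pq_gt0); nra.
  have a_le_m : (a <= m)%N by apply: leq_of_natr_eq_mul aE; lra.
  have b_le_m : (b <= m)%N by apply: leq_of_natr_eq_mul bE; lra.
  rewrite -(@lik_compl m a q) // -(@lik_compl m b p) //.
  by apply: lik_le_of_sum_ge1; rewrite ?natrB ?aE ?bE //; lra.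
- suff -> : a = b by rewrite pq lexx.
  by apply/eqP; rewrite -(eqr_nat R) aE bE pq.
Qed.

Lemma chi2_bernoulliE (p q : R) :
  0 < q < 1 -> chi2 p q = (p - q) ^+ 2 / (q * (1 - q)).
Proof. by case/andP=> q_gt0 q_lt1; rewrite /chi2; field; lra. Qed.

Lemma var_le_of_chi2_le (p q : R) : 0 < p < 1 -> 0 < q < 1 ->
  chi2 q p <= chi2 p q -> q * (1 - q) <= p * (1 - p).
Proof.
move=> p01 q01.
rewrite (@chi2_bernoulliE q p p01) (@chi2_bernoulliE p q q01) -sqrrN opprB.
have [-> // | p_neq_q] := eqVneq p q.
have sq_gt0 : 0 < (p - q) ^+ 2 by rewrite exprn_even_gt0 // subr_eq0.
case/andP: p01 => p_gt0 p_lt1; case/andP: q01 => q_gt0 q_lt1.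
by rewrite ler_pM2l // lef_pV2 // posrE mulr_gt0 // subr_gt0.
Qed.

End Likelihood.

Theorem mainTheorem7 (R : realType) (p q : R) (m kp kq : nat) :
  0 < p < 1 -> 0 < q < 1 -> (1 <= m)%N ->
  kp%:R = m%:R * p -> kq%:R = m%:R * q ->
  lik m kp q > lik m kq p ->
  chi2 p q < chi2 q p.
Proof.
move=> p01 q01 m_gt0 kpE kqE; rewrite !ltNge; apply: contra => chi2_le.
by apply: lik_le_of_var_le => //; apply: var_le_of_chi2_le.
Qed.
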